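(* Let $n\ge3$, $\alpha=(\alpha_2,\dots,\alpha_{n-1})$ positive integers, $N>|\alpha|$, $L=N-|\alpha|$, and $2\le\ell\le n$. There exists a bijection $\phi:W^>\to W^{\le}$ such that: (1) $\phi$ maps $W_k^>$ bijectively onto $W_{k+1}^{\le}$ for each $0\le k\le L-1$; (2) $\mathrm{quinv}'(\phi(w))=\mathrm{quinv}'(w)$ for all $w\in W^>$; (3) the subword of $w$ consisting of the letters $2,\dots,n-1$ equals the corresponding subword of $\phi(w)$.
   Context: $|\alpha|=\sum_i\alpha_i$. For $0\le k\le L$, $W_k$ is the set of words $w=(w_1,\dots,w_N)$ over $\{1,\dots,n\}$ containing exactly $k$ letters $n$, exactly $L-k$ letters $1$, and exactly $\alpha_i$ letters $i$ for $2\le i\le n-1$. $\mathrm{coinv}(w)=\#\{(i,j):i<j,\ w_i<w_j\}$ and $\mathrm{quinv}'(w)=\mathrm{coinv}(w)+\binom{\alpha_\ell}{2}+\cdots+\binom{\alpha_{n-1}}{2}+\binom{k}{2}$ for $w\in W_k$ (the middle sum is empty if $\ell=n$). For $w\in W_k$ let $p_n(w)$ be the position, from the left, of the leftmost $n$ in $w$, and $p_1(w)$ the position, counted from the right, of the rightmost $1$ in the word obtained from $w$ by deleting all $n$'s. $W_k^{\le}$ (resp. $W_k^>$) is the set of $w\in W_k$ with $p_n(w)\le p_1(w)$ (resp. $p_n(w)>p_1(w)$), with the conventions $W_0=W_0^>$ and $W_L=W_L^{\le}$. $W^{\le}=\bigcup_kW_k^{\le}$ and $W^>=\bigcup_kW_k^>$.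 *)

From mathcomp Require Import all_boot.
Set Implicit Arguments. Unset Strict Implicit. Unset Printing Implicit Defensive.

(* alpha : nat -> nat, only alpha 2, ..., alpha (n-1) are relevant. *)
Definition abs_alpha (n : nat) (alpha : nat -> nat) : nat :=
  \sum_(2 <= i < n) alpha i.

Definition Lval (n : nat) (alpha : nat -> nat) (N : nat) : nat :=
  N - abs_alpha n alpha.

Definition inW (n : nat) (alpha : nat -> nat) (N k : nat) (w : seq nat) : bool :=
  [&& size w == N,
      all (fun x => 1 <= x <= n) w,
      count_mem n w == k,
      count_mem 1 w == Lval n alpha N - k
    & all (fun i => count_mem i w == alpha i) (index_iota 2 n)].

Definition p_n (n : nat) (w : seq nat) : nat := (index n w).+1.

(* position (1-based, from the right) of the rightmost 1 in w with all n's deleted *)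
Definition p_1 (n : nat) (w : seq nat) : nat :=
  (index 1 (rev (filter (fun x => x != n) w))).+1.

(* W_k^<= with the conventions W_0 = W_0^> and W_L = W_L^<= *)
Definition inWle (n : nat) (alpha : nat -> nat) (N k : nat) (w : seq nat) : bool :=
  inW n alpha N k w &&
  ((k == Lval n alpha N) || ((k != 0) && (p_n n w <= p_1 n w))).

Definition inWgt (n : nat) (alpha : nat -> nat) (N k : nat) (w : seq nat) : bool :=
  inW n alpha N k w && ~~ inWle n alpha N k w.

Definition inWle_all n alpha N (w : seq nat) : Prop :=
  exists k, k <= Lval n alpha N /\ inWle n alpha N k w.
Definition inWgt_all n alpha N (w : seq nat) : Prop :=
  exists k, k <= Lval n alpha N /\ inWgt n alpha N k w.

Definition coinv (w : seq nat) : nat :=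
  \sum_(i < size w) \sum_(j < size w) ((i < j) && (nth 0 w i < nth 0 w j)).

(* quinv'(w) for w in W_k, where k = number of letters n in w *)
Definition quinv' (n : nat) (alpha : nat -> nat) (ell : nat) (w : seq nat) : nat :=
  coinv w + \sum_(ell <= i < n) 'C(alpha i, 2) + 'C(count_mem n w, 2).

Definition midword (n : nat) (w : seq nat) : seq nat :=
  filter (fun x => 2 <= x <= n.-1) w.

(* A word w is encoded by its n-free subword u (letters in {1..n-1}) and its
   gap vector c, where c_i is the number of letters n between the i-th and the
   (i+1)-th letter of u (so size c = size u + 1); [fill] inverts [gaps].  All
   data of the theorem are read off this code: w lies in W_k iff u has the
   prescribed letter counts and sum c = k; p_n(w) - 1 is the index of the first
   nonzero gap (capped by size u), p_1(w) - 1 is the position of the rightmost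
   1 of u counted from the right, and coinv w = coinv u + sum_i i * c_i.

   phi deletes the rightmost 1 of u, drops the first gap (which is empty for
   w in W_k^>) and adds one letter n to the gap whose index is the position of
   the deleted 1 counted from the right; psi undoes this.  Writing
   rev u = a ++ 1 :: d with 1 not in a, and c = 0 :: b, the two codes
   (rev (a ++ 1 :: d), 0 :: b) and (rev (a ++ d), incr_nth b (size a)) are
   exchanged by phi and psi, and W_k^> membership of the first is equivalent
   to W_(k+1)^<= membership of the second ([inWgt_shift]); the co-inversions
   lost with the 1 are recovered by the new n ([quinv'_shift]).  Finally every
   word of W_k^> (resp. W_(k+1)^<=) has a code of the first (resp. second)
   shape, which yields the theorem. *)

From mathcomp Require Import all_boot zify.

Lemma split_first (T : eqType) (x : T) s :
  x \in s -> exists2 a, x \notin a & exists d, s = a ++ x :: d.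
Proof.
move=> xs; exists (take (index x s) s); first by rewrite in_take ?index_mem ?ltnn.
exists (drop (index x s).+1 s).
by rewrite -{1}(cat_take_drop (index x s) s) (drop_nth x) ?index_mem ?nth_index.
Qed.

Lemma rem_first (T : eqType) (x : T) a d : x \notin a -> rem x (a ++ x :: d) = a ++ d.
Proof.
elim: a => [|y a IH] /=; first by rewrite eqxx.
by rewrite inE negb_or eq_sym => /andP[/negbTE -> /IH ->].
Qed.

Lemma coinv_cons x s : coinv (x :: s) = count (fun y => x < y) s + coinv s.
Proof.
have count_nth (p : pred nat) t : count p t = \sum_(j < size t) p (nth 0 t j).
  by elim: t => [|y t IH]; rewrite ?big_ord0 // big_ord_recl /= IH.
rewrite /coinv /= big_ord_recl big_ord_recl /= add0n count_nth; congr (_ + _).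
by apply: eq_bigr => i _; rewrite big_ord_recl /= add0n.
Qed.

Lemma coinv_mid a x b :
  coinv (a ++ x :: b) =
  coinv (a ++ b) + count (fun y => x < y) b + count (fun y => y < x) a.
Proof.
elim: a => [|y a IH] /=; first by rewrite coinv_cons addn0 addnC.
by rewrite !coinv_cons IH !count_cat /=; lia.
Qed.

(* Gap vectors.  gap_weight c = sum_i i * c_i counts, in the word with gap
   vector c, the pairs (non-n letter, letter n) with the non-n letter first. *)
Fixpoint gap_weight (c : seq nat) : nat :=
  if c is _ :: c' then sumn c' + gap_weight c' else 0.

(* first_nonzero c: index of the first nonempty gap (size c if there is none). *)
Definition first_nonzero (c : seq nat) : nat := find (fun x => 0 < x) c.

Fixpoint decr (c : seq nat) (i : nat) : seq nat :=
  match c, i with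
  | x :: c', 0 => x.-1 :: c'
  | x :: c', i'.+1 => x :: decr c' i'
  | [::], _ => [::]
  end.

Lemma size_decr c i : size (decr c i) = size c.
Proof. by elim: c i => [|x c IH] [|i] //=; rewrite IH. Qed.

Lemma incr_nth_decr c i : 0 < nth 0 c i -> incr_nth (decr c i) i = c.
Proof. by elim: c i => [|x c IH] [|i] //= Hi; rewrite ?prednK ?IH. Qed.

Lemma decr_incr_nth c i : i < size c -> decr (incr_nth c i) i = c.
Proof. by elim: c i => [|x c IH] [|i] //= Hi; rewrite IH. Qed.

Lemma sumn_incr_nth c i : i < size c -> sumn (incr_nth c i) = (sumn c).+1.
Proof. by elim: c i => [|x c IH] [|i] //= Hi; rewrite ?IH //; lia. Qed.

Lemma gap_weight_incr_nth c i : i < size c ->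
  gap_weight (incr_nth c i) = gap_weight c + i.
Proof.
elim: c i => [|x c IH] [|i] //= Hi; first by rewrite addn0.
by rewrite IH // sumn_incr_nth //; lia.
Qed.

Lemma has_pos_sumn c : has (fun x => 0 < x) c = (0 < sumn c).
Proof. by elim: c => [|x c IH] //=; rewrite IH addn_gt0. Qed.

Lemma first_nonzero_lt c : 0 < sumn c -> first_nonzero c < size c.
Proof. by rewrite -has_pos_sumn has_find. Qed.

Lemma nth_first_nonzero c : 0 < sumn c -> 0 < nth 0 c (first_nonzero c).
Proof. by rewrite -has_pos_sumn; apply: nth_find. Qed.

Lemma first_nonzero_sumn0 c : sumn c = 0 -> first_nonzero c = size c.
Proof. by move=> c0; apply: hasNfind; rewrite has_pos_sumn c0. Qed.

Lemma first_nonzero_incr_nth c i : i < size c -> i <= first_nonzero c ->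
  first_nonzero (incr_nth c i) = i.
Proof.
rewrite /first_nonzero; elim: c i => [|x c IH] [|i] //=.
by case: x => //= Hi Hf; rewrite IH.
Qed.

Lemma first_nonzero_decr c : first_nonzero c <= first_nonzero (decr c (first_nonzero c)).
Proof. by rewrite /first_nonzero; elim: c => [|[|x] c IH] //=. Qed.

Section GapEncoding.
Variable n : nat.

Definition non_n (w : seq nat) : seq nat := filter (fun x => x != n) w.

(* gaps w: the i-th entry counts the letters n between the i-th and the
   (i+1)-th letter of non_n w (the first entry: before the first letter, the
   last entry: after the last one); a vector of length size (non_n w) + 1. *)
Fixpoint gaps (w : seq nat) : seq nat :=
  if w is x :: s then (if x == n then incr_nth (gaps s) 0 else 0 :: gaps s)
  else [:: 0].

Fixpoint fill (u c : seq nat) : seq nat :=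
  match u, c with
  | x :: u', c0 :: c' => nseq c0 n ++ x :: fill u' c'
  | [::], c0 :: _ => nseq c0 n
  | _, [::] => [::]
  end.

Lemma gaps_cons w : gaps w = head 0 (gaps w) :: behead (gaps w).
Proof. by case: w => //= x s; case: ifP => // _; case: (gaps s). Qed.

Lemma size_gaps w : size (gaps w) = (size (non_n w)).+1.
Proof.
elim: w => //= x s IH; case: (x == n) => /=; last by rewrite IH.
by rewrite gaps_cons /= -IH [in RHS]gaps_cons.
Qed.

Lemma fill_gaps w : fill (non_n w) (gaps w) = w.
Proof.
have fill_succ u c0 c : fill u (c0.+1 :: c) = n :: fill u (c0 :: c) by case: u.
elim: w => //= x s IH; case: eqP => [->|_] /=; last by rewrite IH.
by rewrite [gaps s]gaps_cons /= fill_succ -gaps_cons IH.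
Qed.

Lemma gaps_nseq m s :
  gaps (nseq m n ++ s) = (head 0 (gaps s) + m) :: behead (gaps s).
Proof.
elim: m => [|m IH] /=; first by rewrite addn0 -gaps_cons.
by rewrite eqxx IH addnS.
Qed.

Lemma gaps_fill u c : all (fun x => x != n) u -> size c = (size u).+1 ->
  gaps (fill u c) = c.
Proof.
elim: u c => [|x u IH] [|c0 c] //=.
  by case: c => // _ _; rewrite -[nseq _ _]cats0 gaps_nseq.
by case/andP=> xn un [Hc]; rewrite gaps_nseq /= (negbTE xn) /= IH.
Qed.

Lemma filter_fill (p : pred nat) u c : p n = false -> size c = (size u).+1 ->
  filter p (fill u c) = filter p u.
Proof.
move=> pn; elim: u c => [|x u IH] [|c0 c] //=; first by rewrite filter_nseq pn.
by case=> Hc; rewrite filter_cat filter_nseq pn /= IH.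
Qed.

Lemma non_n_fill u c : all (fun x => x != n) u -> size c = (size u).+1 ->
  non_n (fill u c) = u.
Proof. by move=> un Hc; rewrite /non_n filter_fill ?eqxx // (all_filterP un). Qed.

Lemma size_fill u c : size c = (size u).+1 -> size (fill u c) = size u + sumn c.
Proof.
elim: u c => [|x u IH] [|c0 c] //=; first by case: c => //= _; rewrite size_nseq addn0.
by case=> Hc; rewrite size_cat size_nseq /= IH //; lia.
Qed.

Lemma count_fill (p : pred nat) u c : size c = (size u).+1 ->
  count p (fill u c) = count p u + p n * sumn c.
Proof.
elim: u c => [|x u IH] [|c0 c] //=; first by case: c => //= _; rewrite count_nseq addn0.
by case=> Hc; rewrite count_cat count_nseq /= IH //; lia.
Qed.

Lemma all_fill (p : pred nat) u c : p n -> all p u -> all p (fill u c).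
Proof.
move=> pn; elim: u c => [|x u IH] [|c0 c] //=; first by rewrite all_nseq pn orbT.
by case/andP=> px pu; rewrite all_cat all_nseq pn orbT /= px IH.
Qed.

Lemma coinv_nseq m s : all (fun y => y <= n) s -> coinv (nseq m n ++ s) = coinv s.
Proof.
move=> sn; elim: m => //= m IH; rewrite coinv_cons IH.
suff -> : count (fun y => n < y) (nseq m n ++ s) = 0 by [].
apply/eqP; rewrite -leqn0 leqNgt -has_count; apply/hasPn => y.
rewrite mem_cat mem_nseq => /orP[/andP[_ /eqP->]|ys]; first by rewrite ltnn.
by rewrite -leqNgt (allP sn).
Qed.

Lemma coinv_fill u c : all (fun x => x < n) u -> size c = (size u).+1 ->
  coinv (fill u c) = coinv u + gap_weight c.
Proof.
elim: u c => [|x u IH] [|c0 c] //=.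
  by case: c => //= _ _; rewrite -[nseq _ _]cats0 coinv_nseq // !addn0.
case/andP=> xn un [Hc]; rewrite coinv_nseq; last first.
  by rewrite /= ltnW //= all_fill //; apply: sub_all un => y /ltnW.
by rewrite !coinv_cons IH // count_fill // xn mul1n; lia.
Qed.

Lemma index_fill u c : all (fun x => x != n) u -> size c = (size u).+1 ->
  index n (fill u c) = minn (first_nonzero c) (size u).
Proof.
rewrite /first_nonzero; elim: u c => [|x u IH] [|c0 c] //=.
  by case: c => // _ _; case: c0 => //= c0; rewrite eqxx.
case/andP=> xn un [Hc]; case: c0 => [|c0] /=; last by rewrite eqxx.
by rewrite (negbTE xn) IH // minnSS.
Qed.

End GapEncoding.

Lemma letters_neq_n {n u} : all (fun x => 1 <= x < n) u -> all (fun x => x != n) u.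
Proof. by apply: sub_all => x /andP[_]; rewrite neq_ltn => ->. Qed.

Section WordsByCode.
Variables (n : nat) (alpha : nat -> nat) (N : nat).
Hypothesis n_gt1 : 1 < n.

Lemma non_n_letters w : all (fun x => 1 <= x <= n) w ->
  all (fun x => 1 <= x < n) (non_n n w).
Proof.
move=> wn; rewrite all_filter; apply: sub_all wn => x /andP[x1 xn].
by apply/implyP => x_n; rewrite x1 ltn_neqAle x_n xn.
Qed.

Lemma inW_fill k u c : all (fun x => 1 <= x < n) u -> size c = (size u).+1 ->
  inW n alpha N k (fill n u c) =
  [&& size u + sumn c == N, sumn c == k, count_mem 1 u == Lval n alpha N - k
    & all (fun i => count_mem i u == alpha i) (index_iota 2 n)].
Proof.
move=> un Hc; have /count_memPn u_n : n \notin u.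
  by apply/negP => /(allP (letters_neq_n un)); rewrite eqxx.
rewrite /inW size_fill // all_fill ?leqnn ?(ltnW n_gt1) //; last first.
  by apply: sub_all un => x /andP[-> /ltnW].
rewrite !count_fill // u_n /= eqxx (gtn_eqF n_gt1) mul1n mul0n addn0.
congr [&& _, _, _ & _]; apply: eq_in_all => i; rewrite mem_index_iota.
by case/andP=> _ i_n; rewrite count_fill // /= (gtn_eqF i_n) mul0n addn0.
Qed.

Lemma p_n_fill u c : all (fun x => x != n) u -> size c = (size u).+1 ->
  p_n n (fill n u c) = (minn (first_nonzero c) (size u)).+1.
Proof. by move=> un Hc; rewrite /p_n index_fill. Qed.

Lemma p_1_fill u c : all (fun x => x != n) u -> size c = (size u).+1 ->
  p_1 n (fill n u c) = (index 1 (rev u)).+1.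
Proof. by move=> un Hc; rewrite /p_1 -/(non_n n _) non_n_fill. Qed.

End WordsByCode.

(* phi deletes the rightmost 1 of the n-free subword, at position j from the
   right (0-based), drops the first gap and adds a letter n to gap j. *)
Definition phi (n : nat) (w : seq nat) : seq nat :=
  let v := rev (non_n n w) in
  fill n (rev (rem 1 v)) (incr_nth (behead (gaps n w)) (index 1 v)).

(* psi removes a letter n from the first nonempty gap s, inserts a 1 at
   position s from the right of the n-free subword and adds an empty first gap. *)
Definition psi (n : nat) (w : seq nat) : seq nat :=
  let v := rev (non_n n w) in let s := first_nonzero (gaps n w) in
  fill n (rev (take s v ++ 1 :: drop s v)) (0 :: decr (gaps n w) s).

(* The two codes exchanged by phi and psi: (u, c) has its rightmost 1 at
   position size a from the right and empty gaps up to that position; (u', c')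
   has lost that 1 and has its first letter n in gap size a. *)
Section Shift.
Variables (n : nat) (alpha : nat -> nat) (N : nat).
Hypothesis n_gt1 : 1 < n.

Variables a d b : seq nat.
Hypotheses (a_no1 : 1 \notin a) (ad_letters : all (fun x => 1 <= x < n) (a ++ d)).
Hypotheses (size_b : size b = (size (a ++ d)).+1) (a_le_b : size a <= first_nonzero b).

Let u := rev (a ++ 1 :: d).
Let c := 0 :: b.
Let u' := rev (a ++ d).
Let c' := incr_nth b (size a).

Let a_lt_b : size a < size b. Proof. by rewrite size_b size_cat; lia. Qed.

Let u_letters : all (fun x => 1 <= x < n) u.
Proof. by move: ad_letters; rewrite all_rev !all_cat /= n_gt1 => ->. Qed.

Let u'_letters : all (fun x => 1 <= x < n) u'. Proof. by rewrite all_rev. Qed.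

Let size_c : size c = (size u).+1.
Proof. by rewrite /= size_b !size_rev !size_cat /= addnS. Qed.

Let size_c' : size c' = (size u').+1.
Proof. by rewrite size_incr_nth a_lt_b size_b size_rev. Qed.

Let count_u i : count_mem i u = count_mem i u' + (1 == i).
Proof. by rewrite !count_rev !count_cat /=; lia. Qed.

Let index1_u : index 1 (rev u) = size a.
Proof. by rewrite revK index_cat (negbTE a_no1) /= addn0. Qed.

Let index1_u' : size a <= index 1 (rev u').
Proof. by rewrite revK index_cat (negbTE a_no1) leq_addr. Qed.

Let first_nonzero_c' : first_nonzero c' = size a.
Proof. exact: first_nonzero_incr_nth. Qed.

Lemma phi_fill : phi n (fill n u c) = fill n u' c'.
Proof.
by rewrite /phi non_n_fill ?gaps_fill ?letters_neq_n // index1_u /u revK rem_first.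
Qed.

Lemma psi_fill : psi n (fill n u' c') = fill n u c.
Proof.
rewrite /psi non_n_fill ?gaps_fill ?letters_neq_n // first_nonzero_c' /u' revK.
by rewrite take_size_cat ?drop_size_cat ?decr_incr_nth.
Qed.

Lemma inWgt_shift k : k < Lval n alpha N ->
  inWgt n alpha N k (fill n u c) = inWle n alpha N k.+1 (fill n u' c').
Proof.
move=> k_lt_L; have un := letters_neq_n u_letters; have u'n := letters_neq_n u'_letters.
rewrite /inWgt /inWle (ltn_eqF k_lt_L).
have -> : p_n n (fill n u c) <= p_1 n (fill n u c) = false.
  apply/negbTE; rewrite p_n_fill ?p_1_fill // index1_u -ltnNge !ltnS leq_min.
  by rewrite ltnS a_le_b size_rev size_cat /= addnS ltnS leq_addr.
have -> : p_n n (fill n u' c') <= p_1 n (fill n u' c').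
  by rewrite p_n_fill ?p_1_fill // first_nonzero_c' ltnS geq_min index1_u'.
rewrite andbF orbF andbT orbT andbF andbT !inW_fill //.
have size_u : size u = (size u').+1 by rewrite !size_rev !size_cat /= addnS.
have sumn_c' : sumn c' = (sumn c).+1 by rewrite sumn_incr_nth.
rewrite andbT size_u sumn_c' addSnnS eqSS count_u /=; congr [&& _, _, _ & _].
- by apply/eqP/eqP; lia.
- apply: eq_in_all => i; rewrite mem_index_iota => /andP[i_ge2 _].
  by rewrite count_u (ltn_eqF i_ge2) addn0.
Qed.

(* The 1 deleted had co-inversions exactly with the size a letters to its
   right; the new n at gap size a recovers them, and shifting the other
   k letters n one gap left is paid for by the change of 'C(k, 2). *)
Lemma quinv'_shift ell :
  quinv' n alpha ell (fill n u' c') = quinv' n alpha ell (fill n u c).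
Proof.
have below_n v : all (fun x => 1 <= x < n) v -> all (fun x => x < n) v.
  by apply: sub_all => x /andP[].
rewrite /quinv' !coinv_fill ?below_n // !count_fill //.
have /count_memPn -> : n \notin u'.
  by apply/negP => /(allP (letters_neq_n u'_letters)); rewrite eqxx.
have /count_memPn -> : n \notin u.
  by apply/negP => /(allP (letters_neq_n u_letters)); rewrite eqxx.
have coinv_u : coinv u = coinv u' + size a.
  rewrite /u /u' rev_cat rev_cons cat_rcons coinv_mid rev_cat.
  have -> : count (fun y => 1 < y) (rev a) = size a.
    rewrite count_rev; apply/eqP; rewrite -all_count; apply/allP => y ya.
    move: ad_letters; rewrite all_cat => /andP[/allP /(_ y ya) /andP[y1 _] _].
    by rewrite ltn_neqAle y1 andbT eq_sym; apply: contraNneq a_no1 => <-.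
  have -> : count (fun y => y < 1) (rev d) = 0.
    apply/eqP; rewrite -leqn0 leqNgt -has_count; apply/hasPn => y.
    rewrite mem_rev => yd; move: ad_letters; rewrite all_cat => /andP[_].
    by move/allP/(_ y yd); rewrite -leqNgt => /andP[].
  by rewrite addn0.
rewrite coinv_u gap_weight_incr_nth // sumn_incr_nth // /= eqxx !mul1n !add0n.
by rewrite binS bin1; lia.
Qed.

(* Only letters 1 and n are moved. *)
Lemma midword_shift : midword n (fill n u' c') = midword n (fill n u c).
Proof.
have no_n : (2 <= n <= n.-1) = false by case: (n) n_gt1 => //= m _; rewrite ltnn andbF.
by rewrite /midword !filter_fill // !filter_rev !filter_cat.
Qed.

End Shift.

Section Decomposition.
Context {n : nat} {alpha : nat -> nat} {N : nat}.
Hypothesis n_gt1 : 1 < n.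

Let L := Lval n alpha N.

Lemma inW_code {k w} : inW n alpha N k w ->
  [/\ all (fun x => 1 <= x < n) (non_n n w), size (gaps n w) = (size (non_n n w)).+1
    & fill n (non_n n w) (gaps n w) = w].
Proof.
case/and5P=> _ w_letters _ _ _.
by rewrite non_n_letters // size_gaps fill_gaps.
Qed.

(* In a word of W_k^> (k < L) the gaps up to the rightmost 1, counted from the
   right in the n-free word, are empty; so the word is the input of phi_fill. *)
Lemma inWgt_decomp {k w} : k < L -> inWgt n alpha N k w ->
  exists a d b, [/\ 1 \notin a, all (fun x => 1 <= x < n) (a ++ d),
    size b = (size (a ++ d)).+1, size a <= first_nonzero b
    & w = fill n (rev (a ++ 1 :: d)) (0 :: b)].
Proof.
move=> k_lt_L w_gt; have [u_letters size_c fill_w] := inW_code (andP w_gt).1.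
move: (non_n n w) (gaps n w) u_letters size_c fill_w w_gt => u c u_letters size_c <-.
have un := letters_neq_n u_letters.
rewrite /inWgt /inWle inW_fill // p_n_fill // p_1_fill // (ltn_eqF k_lt_L) /=.
case/andP=> fill_in; rewrite fill_in /= => not_le.
case/and4P: fill_in => _ /eqP sumn_c /eqP count1_u _.
have : 1 \in rev u by rewrite mem_rev -has_pred1 has_count count1_u subn_gt0.
case/split_first=> a a_no1 [d rev_u].
have index1 : index 1 (rev u) = size a.
  by rewrite rev_u index_cat (negbTE a_no1) /= addn0.
have size_u : size u = (size (a ++ d)).+1.
  by rewrite -size_rev rev_u !size_cat /= addnS.
have a_lt_c : size a < first_nonzero c.
  have [k0|k_gt0] := posnP k.
    by rewrite first_nonzero_sumn0 ?sumn_c // size_c size_u size_cat; lia.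
  by move: not_le; rewrite -lt0n k_gt0 index1 -ltnNge !ltnS leq_min => /andP[].
case: c size_c a_lt_c {sumn_c not_le} => [|[|c0] b] //= [size_b] a_le_b.
exists a, d, b; split => //; last by rewrite -rev_u revK.
- by move: u_letters; rewrite -all_rev rev_u !all_cat /= => /and3P[-> _ ->].
- by rewrite size_b size_u.
Qed.

(* In a word of W_(k+1)^<= the first nonempty gap lies weakly left of the
   rightmost 1 (counted from the right); so the word is an output of phi_fill. *)
Lemma inWle_decomp {k w} : k < L -> inWle n alpha N k.+1 w ->
  exists a d b, [/\ 1 \notin a, all (fun x => 1 <= x < n) (a ++ d),
    size b = (size (a ++ d)).+1, size a <= first_nonzero b
    & w = fill n (rev (a ++ d)) (incr_nth b (size a))].
Proof.
move=> k_lt_L w_le; have [u_letters size_c fill_w] := inW_code (andP w_le).1.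
move: (non_n n w) (gaps n w) u_letters size_c fill_w w_le => u c u_letters size_c <-.
have un := letters_neq_n u_letters.
rewrite /inWle inW_fill // p_n_fill // p_1_fill // => /andP[fill_in le].
case/and4P: fill_in => _ /eqP sumn_c /eqP count1_u _.
set s := first_nonzero c.
have s_le_u : s <= size u by rewrite -ltnS -size_c first_nonzero_lt ?sumn_c.
have s_le_1 : s <= index 1 (rev u).
  case/orP: le => [/eqP k1_L|/andP[_]]; last by rewrite ltnS (minn_idPl s_le_u).
  have /count_memPn u_no1 : count_mem 1 u = 0 by rewrite count1_u k1_L subnn.
  by rewrite memNindex ?mem_rev // size_rev.
exists (take s (rev u)), (drop s (rev u)), (decr c s).
have size_a : size (take s (rev u)) = s by rewrite size_take_min size_rev (minn_idPl s_le_u).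
rewrite size_a cat_take_drop revK size_decr size_c size_rev incr_nth_decr; last first.
  by apply: nth_first_nonzero; rewrite sumn_c.
split => //; rewrite ?all_rev ?first_nonzero_decr //.
by apply: contraL s_le_1 => /index_ltn; rewrite -ltnNge.
Qed.

Lemma phi_spec ell {k w} : k < L -> inWgt n alpha N k w ->
  [/\ inWle n alpha N k.+1 (phi n w), quinv' n alpha ell (phi n w) = quinv' n alpha ell w,
      midword n (phi n w) = midword n w & psi n (phi n w) = w].
Proof.
move=> k_lt_L w_gt.
have [a [d [b [a_no1 ad_letters size_b a_le_b w_eq]]]] := inWgt_decomp k_lt_L w_gt.
move: w_gt; rewrite w_eq phi_fill // inWgt_shift // => w_gt.
by split; rewrite ?quinv'_shift ?midword_shift ?psi_fill.
Qed.

Lemma psi_spec {k v} : k < L ->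
  inWle n alpha N k.+1 v -> inWgt n alpha N k (psi n v) /\ phi n (psi n v) = v.
Proof.
move=> k_lt_L v_le.
have [a [d [b [a_no1 ad_letters size_b a_le_b v_eq]]]] := inWle_decomp k_lt_L v_le.
by move: v_le; rewrite v_eq psi_fill // -inWgt_shift // phi_fill.
Qed.

(* By the conventions W_L^> and W_0^<= are empty (the latter as L > 0). *)
Lemma inWgt_lt_L {k w} : k <= L -> inWgt n alpha N k w -> k < L.
Proof.
move=> k_le /andP[w_in]; rewrite /inWle w_in /= negb_or => /andP[k_neq _].
by rewrite ltn_neqAle k_neq k_le.
Qed.

Lemma inWle_gt0 {k v} : 0 < L -> inWle n alpha N k v -> 0 < k.
Proof.
by move=> L_gt0; case: k => // /andP[_] /=; rewrite orbF => /eqP L0; rewrite /L -L0 in L_gt0.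
Qed.

End Decomposition.

Theorem mainTheorem16 (n : nat) (alpha : nat -> nat) (N ell : nat) :
  3 <= n ->
  (forall i, 2 <= i <= n.-1 -> 0 < alpha i) ->
  abs_alpha n alpha < N ->
  2 <= ell <= n ->
  exists phi : seq nat -> seq nat,
    (* phi is a bijection W^> -> W^<= *)
    (forall w, inWgt_all n alpha N w -> inWle_all n alpha N (phi w)) /\
    (forall w1 w2, inWgt_all n alpha N w1 -> inWgt_all n alpha N w2 ->
       phi w1 = phi w2 -> w1 = w2) /\
    (forall v, inWle_all n alpha N v -> exists2 w, inWgt_all n alpha N w & phi w = v) /\
    (* (1) phi maps W_k^> bijectively onto W_{k+1}^<= for 0 <= k <= L-1 *)
    (forall k, k < Lval n alpha N ->
       (forall w, inWgt n alpha N k w -> inWle n alpha N k.+1 (phi w)) /\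
       (forall v, inWle n alpha N k.+1 v ->
          exists2 w, inWgt n alpha N k w & phi w = v)) /\
    (* (2) quinv' preserved *)
    (forall w, inWgt_all n alpha N w -> quinv' n alpha ell (phi w) = quinv' n alpha ell w) /\
    (* (3) subword of letters 2..n-1 preserved *)
    (forall w, inWgt_all n alpha N w -> midword n (phi w) = midword n w).
Proof.
move=> n_ge3 _ N_gt _; have n_gt1 : 1 < n := ltnW n_ge3.
have L_gt0 : 0 < Lval n alpha N by rewrite subn_gt0.
have phi_all ell' w : inWgt_all n alpha N w ->
    [/\ inWle_all n alpha N (phi n w), quinv' n alpha ell' (phi n w) = quinv' n alpha ell' w,
        midword n (phi n w) = midword n w & psi n (phi n w) = w].
  move=> [k [k_le w_gt]]; have k_lt := inWgt_lt_L k_le w_gt.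
  by have [? ? ? ?] := phi_spec n_gt1 ell' k_lt w_gt; split => //; exists k.+1.
exists (phi n); split; [|split; [|split; [|split; [|split]]]].
- by move=> w /(phi_all 0) [].
- move=> w1 w2 /(phi_all 0) [_ _ _ w1_eq] /(phi_all 0) [_ _ _ w2_eq] eq12.
  by rewrite -w1_eq -w2_eq eq12.
- move=> v [[|k] [k_lt v_le]]; first by have := inWle_gt0 L_gt0 v_le.
  have [w_gt phi_psi] := psi_spec n_gt1 k_lt v_le.
  by exists (psi n v) => //; exists k; rewrite ltnW.
- move=> k k_lt; split; first by move=> w /(phi_spec n_gt1 0 k_lt) [].
  by move=> v /(psi_spec n_gt1 k_lt) [w_gt phi_psi]; exists (psi n v).
- by move=> w /(phi_all ell) [].
- by move=> w /(phi_all 0) [].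
Qed.
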